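(* Let $R$ be a ring with identity and involution $*$, and let $a,b\in R$ with $a$ group invertible. The following are equivalent: (1) $a$ is core invertible with core inverse $b$; (2) $aba=a$, $ab^2=b$, $(ab)^*=ab$; (3) $bab=b$, $ba^2=a$, $(ab)^*=ab$.
   Context: An involution on $R$ satisfies $(a^* )^*=a$, $(ab)^*=b^*a^*$, $(a+b)^*=a^*+b^*$. An element $x\in R$ is a core inverse of $a$ if $axa=a$, $xR=aR$ and $Rx=Ra^*$; it is unique when it exists. $a$ is group invertible if there is $c\in R$ with $aca=a$, $cac=c$, $ac=ca$. *)

From HB Require Import structures.
From mathcomp Require Import all_boot all_algebra.
Set Implicit Arguments. Unset Strict Implicit. Unset Printing Implicit Defensive.
Import GRing.Theory.
Local Open Scope ring_scope.

Definition involution (R : pzRingType) (star : R -> R) : Prop :=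
  [/\ forall a, star (star a) = a,
      forall a b, star (a * b) = star b * star a
    & forall a b, star (a + b) = star a + star b].

Definition same_right_ideal (R : pzRingType) (x y : R) : Prop :=
  forall z : R, (exists r, z = x * r) <-> (exists r, z = y * r).

Definition same_left_ideal (R : pzRingType) (x y : R) : Prop :=
  forall z : R, (exists r, z = r * x) <-> (exists r, z = r * y).

Definition core_inverse (R : pzRingType) (star : R -> R) (a x : R) : Prop :=
  [/\ a * x * a = a, same_right_ideal x a & same_left_ideal x (star a)].

Definition group_invertible (R : pzRingType) (a : R) : Prop :=
  exists c : R, [/\ a * c * a = a, c * a * c = c & a * c = c * a].

From mathcomp Require Import all_boot all_algebra.
Set Implicit Arguments.
Unset Strict Implicit.
Unset Printing Implicit Defensive.
Import GRing.Theory.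
Local Open Scope ring_scope.

(* A core inverse b lies in R a^*, so b = b (ab)^* and ab = ab (ab)^* is
   hermitian; this needs no group inverse.  Conversely, (2) and (3) both lead
   to a b a = a, b a b = b and b a^2 = a, which give bR = aR, while the
   hermitian ab gives Rb = Ra^*.  A group inverse c of a enters only through
   a c a = a and a c = c a, which let a be cancelled on either side. *)

Section Ideals.

Variable R : pzRingType.

Lemma same_right_idealP (x y : R) :
  (exists r, x = y * r) -> (exists s, y = x * s) -> same_right_ideal x y.
Proof.
move=> [r ->] [s ys] z; split=> -[t ->]; first by exists (r * t); rewrite mulrA.
by exists (s * t); rewrite mulrA -ys.
Qed.

Lemma same_left_idealP (x y : R) :
  (exists r, x = r * y) -> (exists s, y = s * x) -> same_left_ideal x y.
Proof.
move=> [r ->] [s ys] z; split=> -[t ->]; first by exists (t * r); rewrite mulrA.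
by exists (t * s); rewrite -mulrA -ys.
Qed.

End Ideals.

Section Involution.

Variables (R : pzRingType) (star : R -> R).
Hypothesis starK : forall x, star (star x) = x.
Hypothesis starM : forall x y, star (x * y) = star y * star x.

Lemma star_fixed_of_mul_star (x : R) : x = x * star x -> star x = x.
Proof. by move=> xE; rewrite xE starM starK -xE. Qed.

Lemma core_inverse_eqs (a b : R) :
  core_inverse star a b ->
  [/\ a * b * a = a, a * b ^+ 2 = b & star (a * b) = a * b].
Proof.
case=> aba bRaR bRastar.
have [r br] : exists r, b = a * r by apply/bRaR; exists 1; rewrite mulr1.
have [t bt] : exists t, b = t * star a by apply/bRastar; exists 1; rewrite mul1r.
have b_ab : b = b * star (a * b).
  by rewrite {1}bt -{1}aba starM starM mulrA -bt -starM.
have sab : star (a * b) = a * b.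
  by apply: star_fixed_of_mul_star; rewrite {1}b_ab mulrA.
by split=> //; rewrite expr2 {2}br !mulrA aba -br.
Qed.

Lemma core_inverse_of_reflexive (a b : R) :
  a * b * a = a -> b * a * b = b -> star (a * b) = a * b ->
  (exists r, b = a * r) -> (exists s, a = b * s) -> core_inverse star a b.
Proof.
move=> aba bab sab baR abR; split=> //; first exact: same_right_idealP.
apply: same_left_idealP.
  by exists (b * star b); rewrite -mulrA -starM sab mulrA bab.
by exists (star a * a); rewrite -mulrA -sab -starM aba.
Qed.

End Involution.

Section CommutingInnerInverse.

Variables (R : pzRingType) (a c : R).
Hypothesis aca : a * c * a = a.
Hypothesis ac_ca : a * c = c * a.

Lemma mulr_sqr_inner_l : c * a ^+ 2 = a.
Proof. by rewrite expr2 mulrA -ac_ca aca. Qed.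

Lemma mulr_sqr_inner_r : a ^+ 2 * c = a.
Proof. by rewrite expr2 -mulrA ac_ca mulrA aca. Qed.

Lemma outer_of_inner_right (b : R) :
  a * b * a = a -> a * b ^+ 2 = b -> b * a * b = b /\ b * a ^+ 2 = a.
Proof.
move=> aba abb.
have acb : a * c * b = b by rewrite -abb expr2 !mulrA aca.
have baa : b * a ^+ 2 = a.
  rewrite -{1}acb ac_ca expr2 !mulrA -(mulrA c a b) -(mulrA c (a * b) a) aba.
  by rewrite -mulrA -expr2 mulr_sqr_inner_l.
by split=> //; rewrite -{2}acb !mulrA -(mulrA b a a) -expr2 baa acb.
Qed.

Lemma mulr_outer_left (b : R) : b * a ^+ 2 = a -> b * a = a * c.
Proof. by move=> baa; rewrite -{1}mulr_sqr_inner_r mulrA baa. Qed.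

End CommutingInnerInverse.

Theorem corollary3p7 (R : pzRingType) (star : R -> R) (a b : R) :
  involution star -> group_invertible a ->
  [/\ (core_inverse star a b ->
         [/\ a * b * a = a, a * b ^+ 2 = b & star (a * b) = a * b]),
      ([/\ a * b * a = a, a * b ^+ 2 = b & star (a * b) = a * b] ->
         [/\ b * a * b = b, b * a ^+ 2 = a & star (a * b) = a * b])
    & ([/\ b * a * b = b, b * a ^+ 2 = a & star (a * b) = a * b] ->
         core_inverse star a b)].
Proof.
move=> [starK starM _] [c [aca _ ac_ca]].
split; first exact: core_inverse_eqs.
- case=> aba abb sab.
  by have [bab baa] := outer_of_inner_right aca ac_ca aba abb.
- case=> bab baa sab.
  have ba_ac := mulr_outer_left aca ac_ca baa.
  have aba : a * b * a = a by rewrite -mulrA ba_ac mulrA -expr2 mulr_sqr_inner_r.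
  apply: core_inverse_of_reflexive => //.
    by exists (c * b); rewrite mulrA -ba_ac bab.
  by exists (a ^+ 2); rewrite baa.
Qed.
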